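(* Let $I=\Delta[\Delta,\Delta]\Delta$. Each of the following subspaces $U$ is a subalgebra of $\Delta$ containing $I$, and the listed elements form a basis for a complement of $I$ in $U$ (i.e. a basis of a subspace $U'$ with $U=U'+I$ a direct sum): $U=\Delta$: $A^iB^jC^k$ ($i,j,k\geq0$); $U=\langle A,B\rangle$: $A^iB^j$ ($i,j\geq0$); $U=\langle B,C\rangle$: $B^jC^k$ ($j,k\geq0$); $U=\langle A,C\rangle$: $A^iC^k$ ($i,k\geq0$); $U=\langle A,B\rangle\cap\langle A,C\rangle$: $A^i$ ($i\geq0$); $U=\langle A,B\rangle\cap\langle B,C\rangle$: $B^j$ ($j\geq0$); $U=\langle A,C\rangle\cap\langle B,C\rangle$: $C^k$ ($k\geq0$); $U=\langle A,B\rangle\cap\langle B,C\rangle\cap\langle A,C\rangle$: $1$.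
   Context: Let $\mathbb F$ be a field and fix a nonzero $q\in\mathbb F$ with $q^4\neq 1$. The universal Askey--Wilson algebra $\Delta$ is the associative $\mathbb F$-algebra with 1 with generators $A,B,C$ subject to the relations that each of $A+\frac{qBC-q^{-1}CB}{q^2-q^{-2}}$, $B+\frac{qCA-q^{-1}AC}{q^2-q^{-2}}$, $C+\frac{qAB-q^{-1}BA}{q^2-q^{-2}}$ is central. $[\Delta,\Delta]={\rm Span}\{uv-vu:u,v\in\Delta\}$ and $\Delta[\Delta,\Delta]\Delta$ is the 2-sided ideal generated by it. For $\mathcal S\subseteq\Delta$, $\langle\mathcal S\rangle$ denotes the $\mathbb F$-subalgebra of $\Delta$ generated by $\mathcal S$. *)

From HB Require Import structures.
From mathcomp Require Import all_boot all_order all_algebra.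
Set Implicit Arguments. Unset Strict Implicit. Unset Printing Implicit Defensive.
Import GRing.Theory.
Local Open Scope ring_scope.

Section AW.
Variable F : fieldType.

Definition central_el (R : algType F) (x : R) : Prop := forall y : R, x * y = y * x.

Definition AW_rel (q : F) (R : algType F) (a b c : R) : Prop :=
  [/\ central_el (a + (q ^+ 2 - q ^- 2)^-1 *: (q *: (b * c) - q^-1 *: (c * b))),
      central_el (b + (q ^+ 2 - q ^- 2)^-1 *: (q *: (c * a) - q^-1 *: (a * c))) &
      central_el (c + (q ^+ 2 - q ^- 2)^-1 *: (q *: (a * b) - q^-1 *: (b * a)))].

(* (D, A, B, C) is the universal Askey--Wilson algebra: it satisfies the
   relations and is initial among F-algebras with three such elements
   (i.e. it is the algebra presented by generators A, B, C and these relations). *)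
Definition is_universal_AW (q : F) (D : algType F) (A B C : D) : Prop :=
  AW_rel q A B C /\
  forall (R : algType F) (a b c : R), AW_rel q a b c ->
    (exists f : D -> R, [/\ linear f, monoid_morphism f, f A = a, f B = b & f C = c]) /\
    (forall f g : D -> R,
        linear f -> monoid_morphism f -> f A = a -> f B = b -> f C = c ->
        linear g -> monoid_morphism g -> g A = a -> g B = b -> g C = c ->
        forall x, f x = g x).

Definition subalg_set (D : algType F) (P : D -> Prop) : Prop :=
  [/\ P 1,
      (forall (k : F) u v, P u -> P v -> P (k *: u + v)) &
      (forall u v, P u -> P v -> P (u * v))].

Definition gen_subalg (D : algType F) (S : D -> Prop) : D -> Prop :=
  fun x => forall P : D -> Prop, subalg_set P -> (forall y, S y -> P y) -> P x.

Definition ideal_set (D : algType F) (P : D -> Prop) : Prop :=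
  [/\ P 0,
      (forall u v, P u -> P v -> P (u + v)) &
      (forall w u, P u -> P (w * u) /\ P (u * w))].

Definition comm_ideal (D : algType F) : D -> Prop :=
  fun x => forall P : D -> Prop, ideal_set P ->
    (forall u v : D, P (u * v - v * u)) -> P x.

Definition basis_of_complement (D : algType F) (U I : D -> Prop)
    (T : eqType) (e : T -> D) : Prop :=
  [/\ subalg_set U,
      (forall x, I x -> U x),
      (forall t, U (e t)),
      (forall (s : seq T) (c : T -> F), uniq s ->
          I (\sum_(t <- s) c t *: e t) -> forall t, t \in s -> c t = 0) &
      (forall u, U u -> exists (s : seq T) (c : T -> F) (y : D),
          I y /\ u = \sum_(t <- s) c t *: e t + y)].

End AW.

(* Modulo the commutator ideal I, Delta is the polynomial algebra F[a,b,c]. The monomials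
   A^i B^j C^k span Delta modulo I because universality forces Delta to be generated by A, B, C.
   They are independent modulo I because the relations hold trivially for the variables of the
   commutative algebra F[a,b,c], so universality yields a morphism Delta -> F[a,b,c] sending
   A, B, C to the variables; it kills I and maps distinct monomials to distinct monomials.
   Comparing the images of two expansions of the same element shows that only common
   monomials survive in an intersection such as <A,B> /\ <A,C>.

   The heart of the matter is I <= L := <A,B> (and its rotations). The element
   g = C + G, G = (q AB - q^-1 BA)/(q^2 - q^-2) in L, is central, so C = g - G and Delta is
   spanned by the g^t L. The relation for A gives
   (q - q^-1) g [A,B] = q ([A,B] G + B [A,G]) - q^-1 ([A,G] B + G [A,B]),
   and [A,G] lies in the L-bimodule generated by [A,B] because [A,-] is a derivation;
   so by induction g^t L [A,B] L <= L for all t. The elements w with g^t L w L <= L for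
   all t form an ideal containing [A,B], [A,C] = -[A,G] and [B,C] = -[B,G], hence all of I. *)

From HB Require Import structures.
From mathcomp Require Import all_boot all_order all_algebra.
From mathcomp Require Import ring mpoly.
From Stdlib Require Import ClassicalDescription.
Set Implicit Arguments. Unset Strict Implicit. Unset Printing Implicit Defensive.
Import GRing.Theory.
Local Open Scope ring_scope.

Section ClosedSets.
Variables (F : fieldType) (D : algType F).

Section Subalgebra.
Variable U : D -> Prop.
Hypothesis hU : subalg_set U.

Lemma subalg_set1 : U 1. Proof. by case: hU. Qed.

Lemma subalg_setZD k u v : U u -> U v -> U (k *: u + v).
Proof. by case: hU => _ h _; apply: h. Qed.

Lemma subalg_setM u v : U u -> U v -> U (u * v).
Proof. by case: hU => _ _ h; apply: h. Qed.

Lemma subalg_set0 : U 0.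
Proof. by have := subalg_setZD (-1) subalg_set1 subalg_set1; rewrite scaleN1r addNr. Qed.

Lemma subalg_setD u v : U u -> U v -> U (u + v).
Proof. by move=> hu hv; have := subalg_setZD 1 hu hv; rewrite scale1r. Qed.

Lemma subalg_setZ k u : U u -> U (k *: u).
Proof. by move=> hu; have := subalg_setZD k hu subalg_set0; rewrite addr0. Qed.

Lemma subalg_setB u v : U u -> U v -> U (u - v).
Proof. by move=> hu hv; rewrite addrC -scaleN1r; apply: subalg_setZD. Qed.

Lemma subalg_setX u n : U u -> U (u ^+ n).
Proof.
move=> hu; elim: n => [|n IH]; first by rewrite expr0; apply: subalg_set1.
by rewrite exprS; apply: subalg_setM.
Qed.
End Subalgebra.

Lemma subalg_setI (U V : D -> Prop) :
  subalg_set U -> subalg_set V -> subalg_set (fun x => U x /\ V x).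
Proof.
move=> hU hV; split; first by split; apply: subalg_set1.
- by move=> k u v [? ?] [? ?]; split; apply: subalg_setZD.
- by move=> u v [? ?] [? ?]; split; apply: subalg_setM.
Qed.

Lemma gen_subalg_subalg (S : D -> Prop) : subalg_set (gen_subalg S).
Proof.
split; first by move=> P [].
- by move=> k u v hu hv P hP hS; apply: (subalg_setZD hP); [apply: hu | apply: hv].
- by move=> u v hu hv P hP hS; apply: (subalg_setM hP); [apply: hu | apply: hv].
Qed.

Lemma mem_gen_subalg (S : D -> Prop) x : S x -> gen_subalg S x.
Proof. by move=> h P _; apply. Qed.

Lemma gen_subalgS (S S' : D -> Prop) :
  (forall x, S x -> S' x) -> forall u, gen_subalg S u -> gen_subalg S' u.
Proof. by move=> h u hu P hP hS; apply: hu => // x /h; apply: hS. Qed.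

Section Ideal.
Variable J : D -> Prop.
Hypothesis hJ : ideal_set J.

Lemma ideal_set0 : J 0. Proof. by case: hJ. Qed.

Lemma ideal_setD u v : J u -> J v -> J (u + v).
Proof. by case: hJ => _ h _; apply: h. Qed.

Lemma ideal_setMl w u : J u -> J (w * u).
Proof. by case: hJ => _ _ h /(h w) []. Qed.

Lemma ideal_setMr w u : J u -> J (u * w).
Proof. by case: hJ => _ _ h /(h w) []. Qed.

Lemma ideal_setZ k u : J u -> J (k *: u).
Proof. by move=> h; rewrite -[u]mul1r scalerAl; apply: ideal_setMl. Qed.

Lemma ideal_setN u : J u -> J (- u).
Proof. by move=> h; rewrite -scaleN1r; apply: ideal_setZ. Qed.

Lemma ideal_set_sum (X : Type) (r : seq X) (G : X -> D) :
  (forall i, J (G i)) -> J (\sum_(i <- r) G i).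
Proof. by move=> h; apply: (big_ind J) => //; [apply: ideal_set0 | apply: ideal_setD]. Qed.
End Ideal.

Definition bracket (x y : D) : D := x * y - y * x.

Lemma bracketDr x y z : bracket x (y + z) = bracket x y + bracket x z.
Proof. by rewrite /bracket mulrDr mulrDl opprD addrACA. Qed.

Lemma bracketDl x y z : bracket (x + y) z = bracket x z + bracket y z.
Proof. by rewrite /bracket mulrDr mulrDl opprD addrACA. Qed.

Lemma bracketZr k x y : bracket x (k *: y) = k *: bracket x y.
Proof. by rewrite /bracket -scalerAr -scalerAl scalerBr. Qed.

Lemma bracketZl k x y : bracket (k *: x) y = k *: bracket x y.
Proof. by rewrite /bracket -scalerAr -scalerAl scalerBr. Qed.

Lemma bracketBr x y z : bracket x (y - z) = bracket x y - bracket x z.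
Proof. by rewrite -scaleN1r bracketDr bracketZr scaleN1r. Qed.

Lemma bracketMr x y z : bracket x (y * z) = bracket x y * z + y * bracket x z.
Proof.
rewrite /bracket mulrBl mulrBr !mulrA addrA; congr (_ + _).
by rewrite -addrA addNr addr0.
Qed.

Lemma bracketMl x y z : bracket (x * y) z = x * bracket y z + bracket x z * y.
Proof.
rewrite /bracket mulrBl mulrBr !mulrA addrA; congr (_ + _).
by rewrite -addrA addNr addr0.
Qed.

Lemma bracketxx x : bracket x x = 0. Proof. exact: subrr. Qed.

Lemma bracketC x y : bracket y x = - bracket x y.
Proof. by rewrite /bracket opprB. Qed.

Lemma bracket1r x : bracket x 1 = 0.
Proof. by rewrite /bracket mulr1 mul1r subrr. Qed.

Lemma bracket1l x : bracket 1 x = 0.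
Proof. by rewrite /bracket mulr1 mul1r subrr. Qed.

Lemma bracket_central g x : central_el g -> bracket x g = 0.
Proof. by move=> h; rewrite /bracket h subrr. Qed.

Lemma comm_ideal_ideal : ideal_set (@comm_ideal F D).
Proof.
split; first by move=> P hP _; apply: ideal_set0.
- by move=> u v hu hv P hP hc; apply: ideal_setD => //; [apply: hu | apply: hv].
- move=> w u hu; split=> P hP hc.
  + by apply: ideal_setMl => //; apply: hu.
  + by apply: ideal_setMr => //; apply: hu.
Qed.

Lemma comm_ideal_bracket u v : comm_ideal (bracket u v).
Proof. by move=> P _; apply. Qed.

Lemma ideal_bracketr_subalg (J : D -> Prop) w :
  ideal_set J -> subalg_set (fun v => J (bracket w v)).
Proof.
move=> hJ; split; first by rewrite bracket1r; apply: ideal_set0.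
- by move=> k u v hu hv; rewrite bracketDr bracketZr; apply: ideal_setD => //; apply: ideal_setZ.
- move=> u v hu hv; rewrite bracketMr.
  by apply: ideal_setD => //; [apply: ideal_setMr | apply: ideal_setMl].
Qed.

Lemma ideal_bracketl_subalg (J : D -> Prop) :
  ideal_set J -> subalg_set (fun u => forall v, J (bracket u v)).
Proof.
move=> hJ; split; first by move=> v; rewrite bracket1l; apply: ideal_set0.
- move=> k u u' hu hu' v; rewrite bracketDl bracketZl.
  by apply: ideal_setD => //; apply: ideal_setZ.
- move=> u u' hu hu' v; rewrite bracketMl.
  by apply: ideal_setD => //; [apply: ideal_setMl | apply: ideal_setMr].
Qed.

End ClosedSets.

Section Generation.
Variables (F : fieldType) (D : algType F) (U : D -> Prop).
Hypothesis hU : subalg_set U.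

(* Subtypes need a boolean predicate, hence the classical decision of [U x]. *)
Definition subalg_mem (x : D) : bool :=
  if excluded_middle_informative (U x) then true else false.

Lemma subalg_memP x : reflect (U x) (subalg_mem x).
Proof. by rewrite /subalg_mem; case: excluded_middle_informative => h; constructor. Qed.

Lemma subalg_mem_closed : GRing.subsemialg_closed (subalg_mem : {pred D}).
Proof.
split; first exact/subalg_memP/(subalg_set1 hU).
- split; first exact/subalg_memP/(subalg_set0 hU).
  by move=> u v /subalg_memP hu /subalg_memP hv; apply/subalg_memP/(subalg_setD hU).
- by move=> a u /subalg_memP hu; apply/subalg_memP/(subalg_setZ hU).
- by move=> u v /subalg_memP hu /subalg_memP hv; apply/subalg_memP/(subalg_setM hU).
Qed.

Definition subalg_type := {x : D | subalg_mem x}.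
HB.instance Definition _ := [isSub of subalg_type for (@sval D (fun x => subalg_mem x))].
HB.instance Definition _ := [Choice of subalg_type by <:].
HB.instance Definition _ :=
  GRing.SubChoice_isSubAlgebra.Build F D (subalg_mem : {pred D}) subalg_type subalg_mem_closed.

Lemma subalg_type_central (z : subalg_type) : central_el (val z) -> central_el z.
Proof. by move=> h y; apply: val_inj; rewrite !GRing.valM h. Qed.

Variables (q : F) (A B C : D).
Hypotheses (hD : is_universal_AW q A B C) (hA : U A) (hB : U B) (hC : U C).

(* Universality gives a morphism [D -> U]; followed by the inclusion [U -> D] it
   fixes [A], [B], [C], hence is the identity. *)
Lemma universal_AW_generated x : U x.
Proof.
case: hD => hAW huniv.
pose a : subalg_type := exist _ A (introT (subalg_memP A) hA).
pose b : subalg_type := exist _ B (introT (subalg_memP B) hB).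
pose c : subalg_type := exist _ C (introT (subalg_memP C) hC).
have hAWU : AW_rel q a b c.
  by case: hAW => h1 h2 h3; split; apply: subalg_type_central;
    rewrite ?(GRing.valD, GRing.valZ, GRing.valM, GRing.valB).
have [[h [h_lin h_mul ha hb hc]] _] := huniv _ a b c hAWU.
have val_lin : linear (val : subalg_type -> D) by move=> k u v; rewrite GRing.valD GRing.valZ.
have val_mul : monoid_morphism (val : subalg_type -> D) by exact: GRing.valM1.
have -> : x = val (h x).
  apply: ((huniv D A B C hAW).2 id (fun w => val (h w))) => //.
  - by move=> k u v /=; rewrite h_lin val_lin.
  - by split=> [|u v] /=; rewrite ?h_mul.1 ?val_mul.1 ?h_mul.2 ?val_mul.2.
  - by rewrite /= ha.
  - by rewrite /= hb.
  - by rewrite /= hc.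
exact/subalg_memP/(valP (h x)).
Qed.
End Generation.

Lemma AW_rel_rot (F : fieldType) (q : F) (D : algType F) (a b c : D) :
  AW_rel q a b c -> AW_rel q b c a.
Proof. by case. Qed.

Section CommIdealInSubalg.
Variables (F : fieldType) (q : F) (D : algType F) (x y z : D).
Hypotheses (hq0 : q != 0) (hq4 : q ^+ 4 != 1) (hAW : AW_rel q x y z).
Hypothesis hgen : forall P : D -> Prop, subalg_set P -> P x -> P y -> P z -> forall w, P w.

Let L := gen_subalg (fun w => w = x \/ w = y).
Let hL : subalg_set L := gen_subalg_subalg _.
Let Lx : L x. Proof. by apply: mem_gen_subalg; left. Qed.
Let Ly : L y. Proof. by apply: mem_gen_subalg; right. Qed.

Let G := (q ^+ 2 - q ^- 2)^-1 *: (q *: (x * y) - q^-1 *: (y * x)).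
Let g := z + G.
Let g_central : central_el g. Proof. by case: hAW. Qed.
Let LG : L G.
Proof.
apply: (subalg_setZ hL); apply: (subalg_setB hL).
all: by apply: (subalg_setZ hL); apply: (subalg_setM hL).
Qed.
Let zE : z = g - G. Proof. by rewrite /g addrK. Qed.

Lemma bracket_xz : bracket x z = - bracket x G.
Proof. by rewrite zE bracketBr bracket_central // add0r. Qed.

Lemma bracket_yz : bracket y z = - bracket y G.
Proof. by rewrite zE bracketBr bracket_central // add0r. Qed.

(* Writing [z = g - G] in [[x, x + (q^+2 - q^-2)^-1 (q yz - q^-1 zy)] = 0] isolates
   [(q - q^-1) g [x,y]] as an expression in [x, y, G] and brackets with [x]. *)
Lemma g_bracket : g * bracket x y =
  (q - q^-1)^-1 *: (q *: (bracket x y * G + y * bracket x G)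
                    - q^-1 *: (bracket x G * y + G * bracket x y)).
Proof.
have q1_neq0 : q - q^-1 != 0.
  apply: contra hq4 => /eqP h.
  have -> : q ^+ 4 = 1 + (q ^+ 3 + q) * (q - q^-1) by field.
  by rewrite h mulr0 addr0.
have q2_neq0 : q ^+ 2 - q ^- 2 != 0.
  apply: contra hq4 => /eqP h.
  have -> : q ^+ 4 = 1 + q ^+ 2 * (q ^+ 2 - q ^- 2) by field.
  by rewrite h mulr0 addr0.
have hx : central_el (x + (q ^+ 2 - q ^- 2)^-1 *: (q *: (y * z) - q^-1 *: (z * y))).
  by case: hAW.
have h0 : q *: (bracket x y * z + y * bracket x z)
          - q^-1 *: (bracket x z * y + z * bracket x y) = 0.
  have := bracket_central x hx; rewrite bracketDr bracketxx add0r bracketZr => /eqP.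
  by rewrite scaler_eq0 invr_eq0 (negbTE q2_neq0) /= bracketBr !bracketZr !bracketMr => /eqP.
rewrite bracket_xz in h0.
have e1 : bracket x y * z + y * - bracket x G
          = g * bracket x y - (bracket x y * G + y * bracket x G).
  by rewrite zE mulrBr -g_central mulrN opprD addrA.
have e2 : - bracket x G * y + z * bracket x y
          = g * bracket x y - (bracket x G * y + G * bracket x y).
  by rewrite zE mulrBl mulNr addrC -addrA -opprD [G * _ + _]addrC.
rewrite e1 e2 !scalerBr in h0.
apply: (scalerI q1_neq0); rewrite scalerA mulfV // scale1r.
apply/eqP; rewrite scalerBl -subr_eq0; apply/eqP; rewrite -h0.
by rewrite !opprB addrACA [RHS]addrACA; congr (_ + _); exact: addrC.
Qed.

Definition sandwiched (t : nat) (w : D) : Prop :=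
  forall l1 l2, L l1 -> L l2 -> L (g ^+ t * l1 * w * l2).

Lemma sandwiched0 t : sandwiched t 0.
Proof. by move=> l1 l2 _ _; rewrite mulr0 mul0r; apply: (subalg_set0 hL). Qed.

Lemma sandwichedZD t k u v : sandwiched t u -> sandwiched t v -> sandwiched t (k *: u + v).
Proof.
move=> hu hv l1 l2 h1 h2; rewrite mulrDr mulrDl -!scalerAr -scalerAl.
by apply: (subalg_setZD hL); [apply: hu | apply: hv].
Qed.

Lemma sandwichedD t u v : sandwiched t u -> sandwiched t v -> sandwiched t (u + v).
Proof. by move=> hu hv; rewrite -[u]scale1r; apply: sandwichedZD. Qed.

Lemma sandwichedZ t k u : sandwiched t u -> sandwiched t (k *: u).
Proof. by move=> hu; rewrite -[_ *: u]addr0; apply: sandwichedZD => //; apply: sandwiched0. Qed.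

Lemma sandwichedB t u v : sandwiched t u -> sandwiched t v -> sandwiched t (u - v).
Proof. by move=> hu hv; rewrite addrC -scaleN1r; apply: sandwichedZD. Qed.

Lemma sandwichedMl t l w : L l -> sandwiched t w -> sandwiched t (l * w).
Proof.
move=> hl hw l1 l2 h1 h2; rewrite mulrA -(mulrA _ l1 l).
by apply: hw => //; apply: (subalg_setM hL).
Qed.

Lemma sandwichedMr t l w : L l -> sandwiched t w -> sandwiched t (w * l).
Proof.
move=> hl hw l1 l2 h1 h2; rewrite !mulrA -(mulrA _ l).
by apply: hw => //; apply: (subalg_setM hL).
Qed.

Lemma sandwichedS t w : sandwiched t.+1 w <-> sandwiched t (g * w).
Proof.
have E l1 l2 : g ^+ t.+1 * l1 * w * l2 = g ^+ t * l1 * (g * w) * l2.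
  by rewrite exprSr -!mulrA; congr (_ * _); rewrite !mulrA g_central.
by split=> h l1 l2 h1 h2; [rewrite -E | rewrite E]; apply: h.
Qed.

Lemma sandwiched_bracket t : sandwiched t (bracket x y) ->
  forall l, L l -> sandwiched t (bracket x l) /\ sandwiched t (bracket y l).
Proof.
move=> h l hl; suff: L l /\ sandwiched t (bracket x l) /\ sandwiched t (bracket y l) by case.
apply: (hl (fun l => L l /\ sandwiched t (bracket x l) /\ sandwiched t (bracket y l))).
- split; first by split; [apply: (subalg_set1 hL) | rewrite !bracket1r; split; apply: sandwiched0].
  + move=> k u v [hu [h1 h2]] [hv [h3 h4]]; split; first exact: (subalg_setZD hL).
    by rewrite !bracketDr !bracketZr; split; apply: sandwichedZD.
  + move=> u v [hu [h1 h2]] [hv [h3 h4]]; split; first exact: (subalg_setM hL).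
    by rewrite !bracketMr; split; apply: sandwichedD;
      [apply: sandwichedMr | apply: sandwichedMl | apply: sandwichedMr | apply: sandwichedMl].
- move=> w [->|->]; split; [exact: Lx | | exact: Ly |]; rewrite bracketxx.
  + by rewrite bracketC -scaleN1r; split; [apply: sandwiched0 | apply: sandwichedZ].
  + by split; last apply: sandwiched0.
Qed.

Lemma sandwiched_bracket_xy t : sandwiched t (bracket x y).
Proof.
elim: t => [|t IH].
  move=> l1 l2 h1 h2; rewrite expr0 mul1r.
  apply: (subalg_setM hL) => //; apply: (subalg_setM hL) => //.
  by apply: (subalg_setB hL); apply: (subalg_setM hL).
have [hxG _] := sandwiched_bracket IH LG.
apply/sandwichedS; rewrite g_bracket; apply: sandwichedZ; apply: sandwichedB; apply: sandwichedZ.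
- by apply: sandwichedD; [apply: sandwichedMr | apply: sandwichedMl].
- by apply: sandwichedD; [apply: sandwichedMr | apply: sandwichedMl].
Qed.

Definition always_sandwiched (w : D) : Prop := forall t, sandwiched t w.

Lemma always_sandwichedMl w u : always_sandwiched u -> always_sandwiched (w * u).
Proof.
move: w u; apply: (hgen (P := fun w => forall u, always_sandwiched u -> always_sandwiched (w * u))).
- split; first by move=> u hu; rewrite mul1r.
  + move=> k w w' hw hw' u hu t; rewrite mulrDl -scalerAl.
    by apply: sandwichedZD; [apply: hw | apply: hw'].
  + by move=> w w' hw hw' u hu; rewrite -mulrA; apply: hw; apply: hw'.
- by move=> u hu t; apply: sandwichedMl.
- by move=> u hu t; apply: sandwichedMl.
- move=> u hu t; rewrite zE mulrBl; apply: sandwichedB; last by apply: sandwichedMl.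
  exact/sandwichedS.
Qed.

Lemma always_sandwichedMr w u : always_sandwiched u -> always_sandwiched (u * w).
Proof.
move: w u; apply: (hgen (P := fun w => forall u, always_sandwiched u -> always_sandwiched (u * w))).
- split; first by move=> u hu; rewrite mulr1.
  + move=> k w w' hw hw' u hu t; rewrite mulrDr -scalerAr.
    by apply: sandwichedZD; [apply: hw | apply: hw'].
  + by move=> w w' hw hw' u hu; rewrite mulrA; apply: hw'; apply: hw.
- by move=> u hu t; apply: sandwichedMr.
- by move=> u hu t; apply: sandwichedMr.
- move=> u hu t; rewrite zE mulrBr; apply: sandwichedB; last by apply: sandwichedMr.
  by rewrite -g_central; apply/sandwichedS.
Qed.

Lemma always_sandwiched_ideal : ideal_set always_sandwiched.
Proof.
split; first by move=> t; apply: sandwiched0.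
- by move=> u v hu hv t; apply: sandwichedD.
- by move=> w u hu; split; [apply: always_sandwichedMl | apply: always_sandwichedMr].
Qed.

Lemma ideal_bracket_all (J : D -> Prop) : ideal_set J ->
  J (bracket x y) -> J (bracket x z) -> J (bracket y z) -> forall u v, J (bracket u v).
Proof.
move=> hJ hxy hxz hyz; apply: hgen; first exact: ideal_bracketl_subalg.
all: apply: hgen; first exact: ideal_bracketr_subalg.
all: rewrite ?bracketxx ?(bracketC x y) ?(bracketC x z) ?(bracketC y z).
all: by [ | apply: (ideal_set0 hJ) | apply: (ideal_setN hJ)].
Qed.

Lemma comm_ideal_sub_gen w : comm_ideal w -> L w.
Proof.
move=> hw.
have : always_sandwiched w.
  apply: hw; first exact: always_sandwiched_ideal.
  apply: (ideal_bracket_all always_sandwiched_ideal) => t.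
  - exact: sandwiched_bracket_xy.
  - rewrite bracket_xz -scaleN1r; apply: sandwichedZ.
    exact: (sandwiched_bracket (sandwiched_bracket_xy t) LG).1.
  - rewrite bracket_yz -scaleN1r; apply: sandwichedZ.
    exact: (sandwiched_bracket (sandwiched_bracket_xy t) LG).2.
move=> /(_ 0%N 1 1 (subalg_set1 hL) (subalg_set1 hL)).
by rewrite expr0 !mul1r mulr1.
Qed.
End CommIdealInSubalg.

Section SpanModuloCommIdeal.
Variables (F : fieldType) (D : algType F) (T : eqType) (e : T -> D).

Definition span_mod_comm (u : D) : Prop :=
  exists (s : seq T) (c : T -> F) (y : D), comm_ideal y /\ u = \sum_(t <- s) c t *: e t + y.

Lemma sum_pairs_uniq (l : seq (T * F)) : exists (s : seq T) (c : T -> F),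
  uniq s /\ \sum_(p <- l) p.2 *: e p.1 = \sum_(t <- s) c t *: e t.
Proof.
elim: l => [|[t k] l [s [c [hs E]]]]; first by exists [::], (fun _ => 0); rewrite !big_nil.
rewrite big_cons E /=; case: (boolP (t \in s)) => ht.
- exists s, (fun t' => if t' == t then c t' + k else c t'); split => //.
  rewrite (bigD1_seq t) //= [in RHS](bigD1_seq t) //= eqxx.
  under [in RHS]eq_bigr => t' ht' do rewrite (negbTE ht').
  by rewrite scalerDl addrA [k *: _ + _]addrC.
- exists (t :: s), (fun t' => if t' == t then k else c t'); split; first by rewrite /= ht.
  rewrite big_cons eqxx; congr (_ + _); apply: eq_big_seq => t' ht'.
  by have /negbTE -> : t' != t by apply: contraNneq ht => <-.
Qed.

Lemma span_mod_comm_pairs (l : seq (T * F)) y :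
  comm_ideal y -> span_mod_comm (\sum_(p <- l) p.2 *: e p.1 + y).
Proof. by move=> hy; have [s [c [_ ->]]] := sum_pairs_uniq l; exists s, c, y. Qed.

Lemma span_mod_comm_uniq u : span_mod_comm u -> exists (s : seq T) (c : T -> F) (y : D),
  [/\ uniq s, comm_ideal y & u = \sum_(t <- s) c t *: e t + y].
Proof.
move=> [s [c [y [hy ->]]]].
have [s' [c' [hs' E]]] := sum_pairs_uniq [seq (t, c t) | t <- s].
by exists s', c', y; rewrite -E big_map.
Qed.

Lemma span_mod_comm_gen t : span_mod_comm (e t).
Proof.
exists [:: t], (fun _ => 1), 0; split; first exact: (ideal_set0 (@comm_ideal_ideal F D)).
by rewrite big_seq1 scale1r addr0.
Qed.

Variables (op : T -> T -> T) (t1 : T).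
Hypotheses (e_op : forall t t', comm_ideal (e t * e t' - e (op t t'))) (e_t1 : e t1 = 1).

Lemma span_mod_comm_subalg : subalg_set span_mod_comm.
Proof.
have hI := @comm_ideal_ideal F D.
split; first by rewrite -e_t1; apply: span_mod_comm_gen.
- move=> k u v [s1 [c1 [y1 [h1 ->]]]] [s2 [c2 [y2 [h2 ->]]]].
  have -> : k *: (\sum_(t <- s1) c1 t *: e t + y1) + (\sum_(t <- s2) c2 t *: e t + y2) =
      \sum_(p <- [seq (t, k * c1 t) | t <- s1] ++ [seq (t, c2 t) | t <- s2]) p.2 *: e p.1
      + (k *: y1 + y2).
    rewrite big_cat !big_map scalerDr scaler_sumr addrACA.
    by congr (_ + _ + _); apply: eq_bigr => t _; rewrite scalerA.
  by apply: span_mod_comm_pairs; apply: (ideal_setD hI) => //; apply: (ideal_setZ hI).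
- move=> u v [s1 [c1 [y1 [h1 ->]]]] [s2 [c2 [y2 [h2 ->]]]].
  set S1 := \sum_(t <- s1) _; set S2 := \sum_(t <- s2) _.
  set l := [seq (op t t', c1 t * c2 t') | t <- s1, t' <- s2].
  set P := \sum_(p <- l) p.2 *: e p.1.
  rewrite -[_ * _](addrNK P) addrC; apply: span_mod_comm_pairs.
  have -> : (S1 + y1) * (S2 + y2) - P = (S1 * S2 - P) + (S1 * y2 + y1 * (S2 + y2)).
    by rewrite mulrDl mulrDr -(addrA (S1 * S2)) addrAC.
  apply: (ideal_setD hI).
    2: by apply: (ideal_setD hI); [apply: (ideal_setMl hI) | apply: (ideal_setMr hI)].
  rewrite /P /l big_allpairs_dep /S1 /S2 mulr_suml -sumrB; apply: (ideal_set_sum hI) => t.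
  rewrite mulr_sumr -sumrB; apply: (ideal_set_sum hI) => t' /=.
  by rewrite -scalerAl -scalerAr scalerA -scalerBr; apply: (ideal_setZ hI).
Qed.
End SpanModuloCommIdeal.

Section MonomialProducts.
Variables (F : fieldType) (D : algType F).
Let hI := @comm_ideal_ideal F D.

Lemma comm_ideal_swap (w x y z : D) : comm_ideal (w * (x * y) * z - w * (y * x) * z).
Proof.
rewrite -mulrBl -mulrBr.
by apply: (ideal_setMr hI); apply: (ideal_setMl hI); apply: comm_ideal_bracket.
Qed.

Lemma comm_ideal_trans (a b c : D) :
  comm_ideal (a - b) -> comm_ideal (b - c) -> comm_ideal (a - c).
Proof. by move=> h1 h2; have := ideal_setD hI h1 h2; rewrite addrA subrK. Qed.

Lemma comm_ideal_monomial2 (x y : D) a b c d :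
  comm_ideal (x ^+ a * y ^+ b * (x ^+ c * y ^+ d) - x ^+ (a + c) * y ^+ (b + d)).
Proof.
have -> : x ^+ a * y ^+ b * (x ^+ c * y ^+ d) = x ^+ a * (y ^+ b * x ^+ c) * y ^+ d
  by rewrite !mulrA.
have -> : x ^+ (a + c) * y ^+ (b + d) = x ^+ a * (x ^+ c * y ^+ b) * y ^+ d
  by rewrite !exprD !mulrA.
exact: comm_ideal_swap.
Qed.

Lemma comm_ideal_monomial3 (x y z : D) i j k i' j' k' :
  comm_ideal (x ^+ i * y ^+ j * z ^+ k * (x ^+ i' * y ^+ j' * z ^+ k')
              - x ^+ (i + i') * y ^+ (j + j') * z ^+ (k + k')).
Proof.
apply: (@comm_ideal_trans _ ((x ^+ i * y ^+ j) * (x ^+ i' * z ^+ k) * (y ^+ j' * z ^+ k'))).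
  have -> : x ^+ i * y ^+ j * z ^+ k * (x ^+ i' * y ^+ j' * z ^+ k') =
    (x ^+ i * y ^+ j) * (z ^+ k * x ^+ i') * (y ^+ j' * z ^+ k') by rewrite !mulrA.
  exact: comm_ideal_swap.
apply: (@comm_ideal_trans _ (x ^+ i * (x ^+ i' * y ^+ j) * (z ^+ k * y ^+ j' * z ^+ k'))).
  have -> : (x ^+ i * y ^+ j) * (x ^+ i' * z ^+ k) * (y ^+ j' * z ^+ k') =
    x ^+ i * (y ^+ j * x ^+ i') * (z ^+ k * y ^+ j' * z ^+ k') by rewrite !mulrA.
  exact: comm_ideal_swap.
have -> : x ^+ i * (x ^+ i' * y ^+ j) * (z ^+ k * y ^+ j' * z ^+ k') =
  (x ^+ i * x ^+ i' * y ^+ j) * (z ^+ k * y ^+ j') * z ^+ k' by rewrite !mulrA.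
have -> : x ^+ (i + i') * y ^+ (j + j') * z ^+ (k + k') =
  (x ^+ i * x ^+ i' * y ^+ j) * (y ^+ j' * z ^+ k) * z ^+ k' by rewrite !exprD !mulrA.
exact: comm_ideal_swap.
Qed.
End MonomialProducts.

Lemma gen_subalg2_span (F : fieldType) (D : algType F) (x y u : D) :
  gen_subalg (fun w => w = x \/ w = y) u ->
  span_mod_comm (fun t : nat * nat => x ^+ t.1 * y ^+ t.2) u.
Proof.
apply; first apply: (@span_mod_comm_subalg _ _ _ _
  (fun t t' => (t.1 + t'.1, t.2 + t'.2)%N) (0, 0)%N).
- by move=> t t'; apply: comm_ideal_monomial2.
- by rewrite !expr0 mulr1.
- have gen := span_mod_comm_gen (fun t : nat * nat => x ^+ t.1 * y ^+ t.2).
  move=> w [->|->].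
  + by have := gen (1, 0)%N; rewrite /= expr1 expr0 mulr1.
  + by have := gen (0, 1)%N; rewrite /= expr1 expr0 mul1r.
Qed.

Lemma gen_subalg3_span (F : fieldType) (D : algType F) (x y z u : D) :
  gen_subalg (fun w => [\/ w = x, w = y | w = z]) u ->
  span_mod_comm (fun t : nat * nat * nat => x ^+ t.1.1 * y ^+ t.1.2 * z ^+ t.2) u.
Proof.
apply; first apply: (@span_mod_comm_subalg _ _ _ _
  (fun t t' => (t.1.1 + t'.1.1, t.1.2 + t'.1.2, t.2 + t'.2)%N) (0, 0, 0)%N).
- by move=> t t'; apply: comm_ideal_monomial3.
- by rewrite !expr0 !mulr1.
- have gen := span_mod_comm_gen (fun t : nat * nat * nat => x ^+ t.1.1 * y ^+ t.1.2 * z ^+ t.2).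
  move=> w [->|->|->].
  + by have := gen (1, 0, 0)%N; rewrite /= expr1 !expr0 !mulr1.
  + by have := gen (0, 1, 0)%N; rewrite /= expr1 !expr0 mulr1 mul1r.
  + by have := gen (0, 0, 1)%N; rewrite /= expr1 !expr0 !mul1r.
Qed.

Section MonomialExponents.
Variable n : nat.

Definition mon2 (a b : 'I_n) (t : nat * nat) : 'X_{1..n} := (U_(a) *+ t.1 + U_(b) *+ t.2)%MM.

Definition mon3 (a b c : 'I_n) (t : nat * nat * nat) : 'X_{1..n} :=
  (U_(a) *+ t.1.1 + U_(b) *+ t.1.2 + U_(c) *+ t.2)%MM.

Lemma mnmXE (a : 'I_n) i d : (U_(a) *+ i)%MM d = if a == d then i else 0%N.
Proof. by rewrite mulmnE mnm1E; case: (a == d); rewrite /= ?mul1n. Qed.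

Lemma mon2E a b t d :
  mon2 a b t d = ((if a == d then t.1 else 0) + (if b == d then t.2 else 0))%N.
Proof. by rewrite mnmDE !mnmXE. Qed.

Lemma mon3E a b c t d : mon3 a b c t d =
  ((if a == d then t.1.1 else 0) + (if b == d then t.1.2 else 0)
   + (if c == d then t.2 else 0))%N.
Proof. by rewrite !mnmDE !mnmXE. Qed.

Lemma mnmX_inj (a : 'I_n) : injective (fun i => U_(a) *+ i)%MM.
Proof. by move=> i j E; have := congr1 (fun m : 'X_{1..n} => m a) E; rewrite !mnmXE eqxx. Qed.

Lemma mon2_inj a b : a != b -> injective (mon2 a b).
Proof.
move=> hab [i j] [i' j'] E; have at_ d := congr1 (fun m : 'X_{1..n} => m d) E.
have hba : b != a by rewrite eq_sym.
move: (at_ a) (at_ b); rewrite !mon2E !eqxx (negbTE hab) (negbTE hba) /=.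
by rewrite !addn0 !add0n => -> ->.
Qed.

Lemma mon3_inj a b c : a != b -> a != c -> b != c -> injective (mon3 a b c).
Proof.
move=> hab hac hbc [[i j] k] [[i' j'] k'] E; have at_ d := congr1 (fun m : 'X_{1..n} => m d) E.
have hba : b != a by rewrite eq_sym.
have hca : c != a by rewrite eq_sym.
have hcb : c != b by rewrite eq_sym.
move: (at_ a) (at_ b) (at_ c); rewrite !mon3E !eqxx.
rewrite (negbTE hab) (negbTE hac) (negbTE hbc) (negbTE hba) (negbTE hca) (negbTE hcb) /=.
by rewrite !addn0 !add0n => -> -> ->.
Qed.
End MonomialExponents.

Section PolynomialModel.
Variables (F : fieldType) (n : nat) (D : algType F) (f : D -> {mpoly F[n]}).
Hypotheses (f_lin : linear f) (f_mul : monoid_morphism f).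

Lemma f0 : f 0 = 0.
Proof.
have := f_lin 1 0 0; rewrite !scale1r addr0 => h.
by apply: (addrI (f 0)); rewrite addr0 -h.
Qed.

Lemma fD u v : f (u + v) = f u + f v.
Proof. by have := f_lin 1 u v; rewrite !scale1r. Qed.

Lemma fZ k u : f (k *: u) = k *: f u.
Proof. by have := f_lin k u 0; rewrite !addr0 f0 addr0. Qed.

Lemma fX u i : f (u ^+ i) = f u ^+ i.
Proof. by elim: i => [|i IH]; rewrite ?expr0 ?f_mul.1 // !exprS f_mul.2 IH. Qed.

Lemma f_comm_ideal x : comm_ideal x -> f x = 0.
Proof.
move=> hx; apply: (hx (fun x => f x = 0)).
- split; first exact: f0.
  + by move=> u v hu hv; rewrite fD hu hv addr0.
  + by move=> w u hu; rewrite !f_mul.2 hu mulr0 mul0r.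
- by move=> u v; rewrite -scaleN1r fD fZ !f_mul.2 mulrC scaleN1r subrr.
Qed.

Section MonomialFamily.
Variables (T : eqType) (e : T -> D) (mn : T -> 'X_{1..n}).
Hypothesis f_e : forall t, f (e t) = 'X_[mn t].

Lemma f_combination (s : seq T) (c : T -> F) y : comm_ideal y ->
  f (\sum_(t <- s) c t *: e t + y) = \sum_(t <- s) c t *: 'X_[mn t].
Proof.
move=> hy; rewrite fD (f_comm_ideal hy) addr0 (big_morph f fD f0).
by apply: eq_bigr => t _; rewrite fZ f_e.
Qed.

Lemma mcoeff_combination (s : seq T) (c : T -> F) m :
  (\sum_(t <- s) c t *: 'X_[mn t] : {mpoly F[n]})@_m = \sum_(t <- s) c t * (mn t == m)%:R.
Proof. by rewrite raddf_sum; apply: eq_bigr => t _; rewrite /= mcoeffZ mcoeffX. Qed.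

Lemma mcoeff_combination_eq0 (s : seq T) (c : T -> F) m : (forall t, mn t != m) ->
  (\sum_(t <- s) c t *: 'X_[mn t] : {mpoly F[n]})@_m = 0.
Proof. by move=> h; rewrite mcoeff_combination big1 // => t _; rewrite (negbTE (h t)) mulr0. Qed.

Hypothesis mn_inj : injective mn.

Lemma mcoeff_combination_uniq (s : seq T) (c : T -> F) t : uniq s -> t \in s ->
  (\sum_(t' <- s) c t' *: 'X_[mn t'] : {mpoly F[n]})@_(mn t) = c t.
Proof.
move=> hs ht; rewrite mcoeff_combination (bigD1_seq t) //= eqxx mulr1 big1 ?addr0 //.
by move=> t' ht'; rewrite (inj_eq mn_inj) (negbTE ht') mulr0.
Qed.

Lemma combination_comm_ideal_eq0 (s : seq T) (c : T -> F) : uniq s ->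
  comm_ideal (\sum_(t <- s) c t *: e t) -> forall t, t \in s -> c t = 0.
Proof.
move=> hs hI t ht; rewrite -(mcoeff_combination_uniq c hs ht).
rewrite -(f_combination _ _ (ideal_set0 (@comm_ideal_ideal F D))) addr0.
by rewrite f_comm_ideal // mcoeff0.
Qed.

Lemma basis_of_complement_monomials (U : D -> Prop) :
  subalg_set U -> (forall x, comm_ideal x -> U x) -> (forall t, U (e t)) ->
  (forall u, U u -> span_mod_comm e u) -> basis_of_complement U (@comm_ideal F D) e.
Proof. by move=> hU hI he hspan; split=> //; apply: combination_comm_ideal_eq0. Qed.
End MonomialFamily.

Lemma span_mod_comm_restrict (T1 T2 T : eqType)
    (e1 : T1 -> D) (mn1 : T1 -> 'X_{1..n}) (e2 : T2 -> D) (mn2 : T2 -> 'X_{1..n})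
    (e : T -> D) (h : T -> T1) (g : T1 -> T) :
  injective mn1 -> (forall t, f (e1 t) = 'X_[mn1 t]) -> (forall t, f (e2 t) = 'X_[mn2 t]) ->
  (forall t, e1 (h t) = e t) -> (forall t1 t2, mn1 t1 = mn2 t2 -> h (g t1) = t1) ->
  forall u, span_mod_comm e1 u -> span_mod_comm e2 u -> span_mod_comm e u.
Proof.
move=> mn1_inj f_e1 f_e2 e1h hg u /span_mod_comm_uniq [s [c [y [hs hy ->]]]] [s2 [c2 [y2 [hy2 E]]]].
(* Outside the image of [h], the exponent [mn1 t] is not among the [mn2]; comparing
   coefficients of the two expansions of [f u] kills [c t]. *)
have coef t : t \in s -> h (g t) != t -> c t = 0.
  move=> ht hne; rewrite -(mcoeff_combination_uniq mn1_inj c hs ht) -(f_combination f_e1 _ _ hy).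
  rewrite E (f_combination f_e2 _ _ hy2) mcoeff_combination_eq0 // => t2.
  by apply: contra hne => /eqP /esym /hg ->.
have -> : \sum_(t <- s) c t *: e1 t = \sum_(p <- [seq (g t, c t) | t <- s]) p.2 *: e p.1.
  rewrite big_map; apply: eq_big_seq => t ht /=.
  case: (eqVneq (h (g t)) t) => [hgt|hne]; first by rewrite -e1h hgt.
  by rewrite (coef t ht hne) !scale0r.
exact: span_mod_comm_pairs.
Qed.
Lemma f_power (w : D) (a : 'I_n) : f w = 'X_a -> forall i, f (w ^+ i) = 'X_[U_(a) *+ i].
Proof. by move=> fw i; rewrite fX fw mpolyXn. Qed.

Lemma f_monomial2 (x y : D) (a b : 'I_n) : f x = 'X_a -> f y = 'X_b ->
  forall t, f (x ^+ t.1 * y ^+ t.2) = 'X_[mon2 a b t].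
Proof. by move=> fx fy t; rewrite f_mul.2 (f_power fx) (f_power fy) -mpolyXD. Qed.

Lemma f_monomial3 (x y z : D) (a b c : 'I_n) : f x = 'X_a -> f y = 'X_b -> f z = 'X_c ->
  forall t, f (x ^+ t.1.1 * y ^+ t.1.2 * z ^+ t.2) = 'X_[mon3 a b c t].
Proof.
by move=> fx fy fz t; rewrite !f_mul.2 (f_power fx) (f_power fy) (f_power fz) -!mpolyXD.
Qed.

Lemma basis_of_complement_pair (x y : D) (a b : 'I_n) :
  a != b -> f x = 'X_a -> f y = 'X_b ->
  (forall w, comm_ideal w -> gen_subalg (fun v => v = x \/ v = y) w) ->
  basis_of_complement (gen_subalg (fun v => v = x \/ v = y)) (@comm_ideal F D)
    (fun t : nat * nat => x ^+ t.1 * y ^+ t.2).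
Proof.
move=> hab fx fy hI; have hU := gen_subalg_subalg (fun v => v = x \/ v = y).
apply: (basis_of_complement_monomials (f_monomial2 fx fy) (mon2_inj hab)) => //.
- move=> t; apply: (subalg_setM hU); apply: (subalg_setX hU).
  + by apply: mem_gen_subalg; left.
  + by apply: mem_gen_subalg; right.
- exact: gen_subalg2_span.
Qed.

Lemma basis_of_complement_full (x y z : D) (a b c : 'I_n) :
  a != b -> a != c -> b != c -> f x = 'X_a -> f y = 'X_b -> f z = 'X_c ->
  (forall w, gen_subalg (fun v => [\/ v = x, v = y | v = z]) w) ->
  basis_of_complement (fun _ => True) (@comm_ideal F D)
    (fun t : nat * nat * nat => x ^+ t.1.1 * y ^+ t.1.2 * z ^+ t.2).
Proof.
move=> hab hac hbc fx fy fz hgen.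
apply: (basis_of_complement_monomials (f_monomial3 fx fy fz) (mon3_inj hab hac hbc)) => //.
by move=> u _; apply: gen_subalg3_span.
Qed.
End PolynomialModel.

Section UniversalAWBases.
Variables (F : fieldType) (q : F) (D : algType F) (A B C : D).
Hypotheses (hq0 : q != 0) (hq4 : q ^+ 4 != 1) (hD : is_universal_AW q A B C).

Let a0 : 'I_3 := ord0.
Let a1 : 'I_3 := Ordinal (isT : (1 < 3)%N).
Let a2 : 'I_3 := ord_max.

Lemma universal_AW_poly_model : exists f : D -> {mpoly F[3]},
  [/\ linear f, monoid_morphism f, f A = 'X_a0, f B = 'X_a1 & f C = 'X_a2].
Proof.
have hAW : AW_rel q ('X_a0 : {mpoly F[3]}) 'X_a1 'X_a2 by split=> w; apply: mulrC.
exact: (hD.2 _ _ _ _ hAW).1.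
Qed.

Local Notation AB := (gen_subalg (fun w => w = A \/ w = B)).
Local Notation BC := (gen_subalg (fun w => w = B \/ w = C)).
Local Notation AC := (gen_subalg (fun w => w = A \/ w = C)).

Let hgen (P : D -> Prop) : subalg_set P -> P A -> P B -> P C -> forall w, P w.
Proof. by move=> hP hA hB hC w; apply: (universal_AW_generated hP hD). Qed.

Let comm_ideal_sub_AB w : comm_ideal w -> AB w.
Proof. exact: (comm_ideal_sub_gen hq0 hq4 hD.1 hgen). Qed.

Let comm_ideal_sub_BC w : comm_ideal w -> BC w.
Proof.
apply: (comm_ideal_sub_gen hq0 hq4 (AW_rel_rot hD.1)).
by move=> P hP hB hC hA; apply: hgen.
Qed.

Let comm_ideal_sub_AC w : comm_ideal w -> AC w.
Proof.
move=> hw; apply: (gen_subalgS (S := fun v => v = C \/ v = A)); first by move=> v [] ->; auto.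
apply: (comm_ideal_sub_gen hq0 hq4 (AW_rel_rot (AW_rel_rot hD.1))) => //.
by move=> P hP hC hA hB; apply: hgen.
Qed.

Variable f : D -> {mpoly F[3]}.
Hypothesis hf : [/\ linear f, monoid_morphism f, f A = 'X_a0, f B = 'X_a1 & f C = 'X_a2].

Let f_lin : linear f. Proof. by case: hf. Qed.
Let f_mul : monoid_morphism f. Proof. by case: hf. Qed.
Let fA : f A = 'X_a0. Proof. by case: hf. Qed.
Let fB : f B = 'X_a1. Proof. by case: hf. Qed.
Let fC : f C = 'X_a2. Proof. by case: hf. Qed.

Lemma basis_universal_AW : basis_of_complement (fun _ => True) (@comm_ideal F D)
  (fun t : nat * nat * nat => A ^+ t.1.1 * B ^+ t.1.2 * C ^+ t.2).
Proof.
apply: (basis_of_complement_full f_lin f_mul _ _ _ fA fB fC) => // w.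
apply: hgen; first exact: gen_subalg_subalg.
all: apply: mem_gen_subalg; by [apply: Or31 | apply: Or32 | apply: Or33].
Qed.

Let AB_subalg : subalg_set AB := gen_subalg_subalg _.
Let BC_subalg : subalg_set BC := gen_subalg_subalg _.
Let AC_subalg : subalg_set AC := gen_subalg_subalg _.
Let A_AB : AB A := mem_gen_subalg (or_introl erefl).
Let A_AC : AC A := mem_gen_subalg (or_introl erefl).
Let B_AB : AB B := mem_gen_subalg (or_intror erefl).
Let B_BC : BC B := mem_gen_subalg (or_introl erefl).
Let C_BC : BC C := mem_gen_subalg (or_intror erefl).
Let C_AC : AC C := mem_gen_subalg (or_intror erefl).

Lemma basis_AB :
  basis_of_complement AB (@comm_ideal F D) (fun t : nat * nat => A ^+ t.1 * B ^+ t.2).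
Proof. exact: (basis_of_complement_pair f_lin f_mul _ fA fB comm_ideal_sub_AB). Qed.

Lemma basis_BC :
  basis_of_complement BC (@comm_ideal F D) (fun t : nat * nat => B ^+ t.1 * C ^+ t.2).
Proof. exact: (basis_of_complement_pair f_lin f_mul _ fB fC comm_ideal_sub_BC). Qed.

Lemma basis_AC :
  basis_of_complement AC (@comm_ideal F D) (fun t : nat * nat => A ^+ t.1 * C ^+ t.2).
Proof. exact: (basis_of_complement_pair f_lin f_mul _ fA fC comm_ideal_sub_AC). Qed.

Lemma basis_AB_AC :
  basis_of_complement (fun u => AB u /\ AC u) (@comm_ideal F D) (fun i : nat => A ^+ i).
Proof.
apply: (basis_of_complement_monomials f_lin f_mul (f_power f_mul fA) (@mnmX_inj _ a0)).
- exact: subalg_setI.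
- by move=> w hw; split; [apply: comm_ideal_sub_AB | apply: comm_ideal_sub_AC].
- move=> i; split.
  + exact: (subalg_setX AB_subalg i A_AB).
  + exact: (subalg_setX AC_subalg i A_AC).
move=> u [hu1 hu2].
apply: (span_mod_comm_restrict f_lin f_mul (mon2_inj _) (f_monomial2 f_mul fA fB)
  (f_monomial2 f_mul fA fC) (h := fun i => (i, 0%N)) (g := fst) _ _
  (gen_subalg2_span hu1) (gen_subalg2_span hu2)) => //.
- by move=> i; rewrite expr0 mulr1.
- move=> [i j] t2 /(congr1 (fun m : 'X_{1..3} => m a1)).
  by rewrite !mon2E /= !add0n => ->.
Qed.

Lemma basis_AB_BC :
  basis_of_complement (fun u => AB u /\ BC u) (@comm_ideal F D) (fun j : nat => B ^+ j).
Proof.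
apply: (basis_of_complement_monomials f_lin f_mul (f_power f_mul fB) (@mnmX_inj _ a1)).
- exact: subalg_setI.
- by move=> w hw; split; [apply: comm_ideal_sub_AB | apply: comm_ideal_sub_BC].
- move=> j; split.
  + exact: (subalg_setX AB_subalg j B_AB).
  + exact: (subalg_setX BC_subalg j B_BC).
move=> u [hu1 hu2].
apply: (span_mod_comm_restrict f_lin f_mul (mon2_inj _) (f_monomial2 f_mul fA fB)
  (f_monomial2 f_mul fB fC) (h := fun j => (0%N, j)) (g := snd) _ _
  (gen_subalg2_span hu1) (gen_subalg2_span hu2)) => //.
- by move=> j; rewrite expr0 mul1r.
- move=> [i j] t2 /(congr1 (fun m : 'X_{1..3} => m a0)).
  by rewrite !mon2E /= !addn0 => ->.
Qed.

Lemma basis_AC_BC :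
  basis_of_complement (fun u => AC u /\ BC u) (@comm_ideal F D) (fun k : nat => C ^+ k).
Proof.
apply: (basis_of_complement_monomials f_lin f_mul (f_power f_mul fC) (@mnmX_inj _ a2)).
- exact: subalg_setI.
- by move=> w hw; split; [apply: comm_ideal_sub_AC | apply: comm_ideal_sub_BC].
- move=> k; split.
  + exact: (subalg_setX AC_subalg k C_AC).
  + exact: (subalg_setX BC_subalg k C_BC).
move=> u [hu1 hu2].
apply: (span_mod_comm_restrict f_lin f_mul (mon2_inj _) (f_monomial2 f_mul fA fC)
  (f_monomial2 f_mul fB fC) (h := fun k => (0%N, k)) (g := snd) _ _
  (gen_subalg2_span hu1) (gen_subalg2_span hu2)) => //.
- by move=> k; rewrite expr0 mul1r.
- move=> [i k] t2 /(congr1 (fun m : 'X_{1..3} => m a0)).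
  by rewrite !mon2E /= !addn0 => ->.
Qed.

Lemma basis_AB_BC_AC : basis_of_complement (fun u => AB u /\ BC u /\ AC u)
  (@comm_ideal F D) (fun _ : unit => 1).
Proof.
have f1 : forall t : unit, f 1 = 'X_[0%MM] by rewrite f_mul.1 mpolyX0.
apply: (basis_of_complement_monomials f_lin f_mul f1) => //.
- by case; case.
- by apply: subalg_setI => //; apply: subalg_setI.
- move=> w hw; split; first exact: comm_ideal_sub_AB.
  by split; [exact: comm_ideal_sub_BC | exact: comm_ideal_sub_AC].
- by move=> _; split; [|split]; apply: subalg_set1.
case: basis_AB_BC => _ _ _ _ span_AB_BC u [hu1 [hu2 hu3]].
apply: (span_mod_comm_restrict f_lin f_mul (@mnmX_inj _ a1) (f_power f_mul fB)
  (f_monomial2 f_mul fA fC) (h := fun _ => 0%N) (g := fun _ => tt) _ _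
  (span_AB_BC u (conj hu1 hu2)) (gen_subalg2_span hu3)) => //.
move=> j t2 /(congr1 (fun m : 'X_{1..3} => m a1)).
by rewrite mnmXE mon2E /= => ->.
Qed.
End UniversalAWBases.

Theorem proposition11p16 (F : fieldType) (q : F) (hq0 : q != 0) (hq4 : q ^+ 4 != 1)
  (D : algType F) (A B C : D) (hD : is_universal_AW q A B C) :
  let I := comm_ideal (D := D) in
  let AB := gen_subalg (fun x => x = A \/ x = B) in
  let BC := gen_subalg (fun x => x = B \/ x = C) in
  let AC := gen_subalg (fun x => x = A \/ x = C) in
  [/\ basis_of_complement (fun _ => True) I
        (fun t : nat * nat * nat => A ^+ t.1.1 * B ^+ t.1.2 * C ^+ t.2),
      basis_of_complement AB I (fun t : nat * nat => A ^+ t.1 * B ^+ t.2),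
      basis_of_complement BC I (fun t : nat * nat => B ^+ t.1 * C ^+ t.2),
      basis_of_complement AC I (fun t : nat * nat => A ^+ t.1 * C ^+ t.2) &
    [/\ basis_of_complement (fun x => AB x /\ AC x) I (fun i : nat => A ^+ i),
      basis_of_complement (fun x => AB x /\ BC x) I (fun j : nat => B ^+ j),
      basis_of_complement (fun x => AC x /\ BC x) I (fun k : nat => C ^+ k) &
      basis_of_complement (fun x => AB x /\ BC x /\ AC x) I (fun _ : unit => (1 : D))]].
Proof.
move=> I AB BC AC; have [f hf] := universal_AW_poly_model hD.
split; last split.
- exact: (basis_universal_AW hD hf).
- exact: (basis_AB hq0 hq4 hD hf).
- exact: (basis_BC hq0 hq4 hD hf).
- exact: (basis_AC hq0 hq4 hD hf).
- exact: (basis_AB_AC hq0 hq4 hD hf).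
- exact: (basis_AB_BC hq0 hq4 hD hf).
- exact: (basis_AC_BC hq0 hq4 hD hf).
- exact: (basis_AB_BC_AC hq0 hq4 hD hf).
Qed.
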